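(* If $\Phi$ is a depth-bounded fuzzy simulation between fuzzy automata $\mathcal{A}$ and $\mathcal{A}'$, then $\|\Phi\|_{\mathcal{A},\mathcal{A}'}\le S(\mathbf{L}(\mathcal{A}),\mathbf{L}(\mathcal{A}'))$.
   Context: $\mathcal{L}=\langle L,\le,\otimes,\Rightarrow,0,1\rangle$ is a complete residuated lattice: $\langle L,\le,0,1\rangle$ is a complete lattice with least element $0$ and greatest element $1$, $\langle L,\otimes,1\rangle$ is a commutative monoid, and $x\otimes y\le z$ iff $x\le (y\Rightarrow z)$. Fuzzy sets/relations are maps into $L$ ordered pointwise; $\varphi^{-1}(b,a)=\varphi(a,b)$; $(\varphi\circ\psi)(a,c)=\bigvee_b\varphi(a,b)\otimes\psi(b,c)$, $(f\circ\varphi)(b)=\bigvee_a f(a)\otimes\varphi(a,b)$, $(\varphi\circ g)(a)=\bigvee_b\varphi(a,b)\otimes g(b)$; $S(g,f)=\bigwedge_a(g(a)\Rightarrow f(a))$. A fuzzy automaton over $\Sigma$ is $\mathcal{A}=\langle A,\delta^{\mathcal{A}},\sigma^{\mathcal{A}},\tau^{\mathcal{A}}\rangle$ with $A$ nonempty, $\delta^{\mathcal{A}}:A\times\Sigma\times A\to L$, $\sigma^{\mathcal{A}},\tau^{\mathcal{A}}:A\to L$; $\delta^{\mathcal{A}}_s(x,y)=\delta^{\mathcal{A}}(x,s,y)$; similarly $\mathcal{A}'$ with states $A'$. $\mathbf{L}(\mathcal{A})(s_1\cdots s_k)=\sigma^{\mathcal{A}}\circ\delta^{\mathcal{A}}_{s_1}\circ\cdots\circ\delta^{\mathcal{A}}_{s_k}\circ\tau^{\mathcal{A}}$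 for words in $\Sigma^*$. $\|\varphi\|_{\mathcal{A},\mathcal{A}'}=S(\sigma^{\mathcal{A}},\sigma^{\mathcal{A}'}\circ\varphi^{-1})$. A depth-bounded fuzzy simulation between $\mathcal{A}$ and $\mathcal{A}'$ is a sequence $\Phi=(\varphi_n)_{n\in\mathbb{N}}$ of fuzzy relations $A\times A'\to L$ with $\varphi_n\le\varphi_{n-1}$ ($n\ge1$), $\varphi_0^{-1}\circ\tau^{\mathcal{A}}\le\tau^{\mathcal{A}'}$, and $\varphi_n^{-1}\circ\delta^{\mathcal{A}}_s\le\delta^{\mathcal{A}'}_s\circ\varphi_{n-1}^{-1}$ for all $s\in\Sigma$, $n\ge1$; its norm is $\|\Phi\|_{\mathcal{A},\mathcal{A}'}=\bigwedge_n\|\varphi_n\|_{\mathcal{A},\mathcal{A}'}$. *)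

From Stdlib Require Import List.
Set Implicit Arguments.
Unset Strict Implicit.

(* A complete residuated lattice <L, <=, (x), =>, 0, 1>. Arbitrary joins and
   meets are given as operations on subsets (predicates) of the carrier. *)
Record CRL := {
  car :> Type;
  le : car -> car -> Prop;
  sup : (car -> Prop) -> car;
  inf : (car -> Prop) -> car;
  zero : car;
  one : car;
  mul : car -> car -> car;
  res : car -> car -> car;
  le_refl : forall x, le x x;
  le_trans : forall x y z, le x y -> le y z -> le x z;
  le_antisym : forall x y, le x y -> le y x -> x = y;
  sup_ub : forall (P : car -> Prop) x, P x -> le x (sup P);
  sup_least : forall (P : car -> Prop) y, (forall x, P x -> le x y) -> le (sup P) y;
  inf_lb : forall (P : car -> Prop) x, P x -> le (inf P) x;
  inf_greatest : forall (P : car -> Prop) y, (forall x, P x -> le y x) -> le y (inf P);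
  zero_least : forall x, le zero x;
  one_greatest : forall x, le x one;
  mul_assoc : forall x y z, mul x (mul y z) = mul (mul x y) z;
  mul_comm : forall x y, mul x y = mul y x;
  mul_one : forall x, mul x one = x;
  adjoint : forall x y z, le (mul x y) z <-> le x (res y z)
}.

Section Ops.
Variable L : CRL.

Definition bigsup {I : Type} (f : I -> L) : L := sup (fun x => exists i, x = f i).
Definition biginf {I : Type} (f : I -> L) : L := inf (fun x => exists i, x = f i).

Definition finv {A B : Type} (phi : A -> B -> L) : B -> A -> L := fun b a => phi a b.
Definition rcomp {A B C : Type} (phi : A -> B -> L) (psi : B -> C -> L) : A -> C -> L :=
  fun a c => bigsup (fun b => mul (phi a b) (psi b c)).
Definition vrcomp {A B : Type} (f : A -> L) (phi : A -> B -> L) : B -> L :=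
  fun b => bigsup (fun a => mul (f a) (phi a b)).
Definition rvcomp {A B : Type} (phi : A -> B -> L) (g : B -> L) : A -> L :=
  fun a => bigsup (fun b => mul (phi a b) (g b)).
Definition vvcomp {A : Type} (f g : A -> L) : L := bigsup (fun a => mul (f a) (g a)).

Definition fle {A : Type} (f g : A -> L) : Prop := forall a, le (f a) (g a).
Definition rle {A B : Type} (phi psi : A -> B -> L) : Prop :=
  forall a b, le (phi a b) (psi a b).

Definition Sdeg {A : Type} (g f : A -> L) : L := biginf (fun a => res (g a) (f a)).
End Ops.

Record FAut (L : CRL) (Sigma : Type) := {
  st : Type;
  st_inh : inhabited st;
  delta : st -> Sigma -> st -> L;
  sigma : st -> L;
  tau : st -> L
}.

Arguments delta {L Sigma} f _ _ _.
Arguments sigma {L Sigma} f _.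
Arguments tau {L Sigma} f _.

Section Aut.
Variables (L : CRL) (Sigma : Type).

Definition deltas (A : FAut L Sigma) (s : Sigma) : st A -> st A -> L :=
  fun x y => delta A x s y.

(* L(A)(s1...sk) = sigma o delta_s1 o ... o delta_sk o tau *)
Definition lang (A : FAut L Sigma) (w : list Sigma) : L :=
  vvcomp (fold_left (fun f s => vrcomp f (@deltas A s)) w (sigma A)) (tau A).

Definition rel_norm (A A' : FAut L Sigma) (phi : st A -> st A' -> L) : L :=
  Sdeg (sigma A) (vrcomp (sigma A') (finv phi)).

Definition depth_bounded_sim (A A' : FAut L Sigma)
    (Phi : nat -> st A -> st A' -> L) : Prop :=
  (forall n, rle (Phi (S n)) (Phi n)) /\
  fle (rvcomp (finv (Phi 0)) (tau A)) (tau A') /\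
  (forall (s : Sigma) n,
     rle (rcomp (finv (Phi (S n))) (@deltas A s))
         (rcomp (@deltas A' s) (finv (Phi n)))).

Definition dbs_norm (A A' : FAut L Sigma) (Phi : nat -> st A -> st A' -> L) : L :=
  biginf (fun n => @rel_norm A A' (Phi n)).
End Aut.
Arguments deltas {L Sigma} A s _ _.
Arguments depth_bounded_sim {L Sigma} A A' Phi.
Arguments dbs_norm {L Sigma} A A' Phi.
Arguments rel_norm {L Sigma} A A' phi.

From Stdlib Require Import List.

(* Write c for the norm ||Phi|| = /\_n ||phi_n||.  For a word w of length k,
   c <= ||phi_k|| says exactly that c (x) sigma <= sigma' o phi_k^{-1}.  This
   inequality "c (x) f <= f' o phi_{n+1}^{-1}" is an invariant which is pushed
   through one letter s by the simulation condition for delta_s, lowering the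
   depth index by one:  c (x) (f o delta_s) <= (f' o delta'_s) o phi_n^{-1}.
   After the last letter the index is 0 and the condition on tau gives
   c (x) (f o tau) <= f' o tau'.  Hence c (x) L(A)(w) <= L(A')(w) for every w,
   i.e. c <= L(A)(w) => L(A')(w), and so c <= S(L(A), L(A')). *)

Section ResiduatedLattice.
Context {L : CRL}.

Lemma le_mul_r (x y z : L) : le x y -> le (mul z x) (mul z y).
Proof.
  intro Hxy. rewrite (mul_comm z x). apply adjoint.
  apply le_trans with y; [exact Hxy |]. apply adjoint.
  rewrite mul_comm. apply le_refl.
Qed.

Lemma le_mul_l (x y z : L) : le x y -> le (mul x z) (mul y z).
Proof. intro Hxy. rewrite (mul_comm x), (mul_comm y). now apply le_mul_r. Qed.

Lemma le_bigsup {I : Type} {f : I -> L} (i : I) {x : L} :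
  le x (f i) -> le x (bigsup f).
Proof.
  intro Hx. apply le_trans with (f i); [exact Hx |].
  apply sup_ub. now exists i.
Qed.

Lemma bigsup_least {I : Type} (f : I -> L) (y : L) :
  (forall i, le (f i) y) -> le (bigsup f) y.
Proof. intro Hf. apply sup_least. now intros x [i ->]. Qed.

Lemma biginf_lb {I : Type} (f : I -> L) (i : I) : le (biginf f) (f i).
Proof. apply inf_lb. now exists i. Qed.

Lemma bigsup_mono {I : Type} (f g : I -> L) :
  (forall i, le (f i) (g i)) -> le (bigsup f) (bigsup g).
Proof. intro Hfg. apply bigsup_least. intro i. now apply (le_bigsup i). Qed.

(* (x) distributes over joins; we use it in the form of an upper-bound rule,
   which follows from (x) - being a left adjoint. *)
Lemma bigsup_mul_l {I : Type} (f : I -> L) (c y : L) :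
  (forall i, le (mul (f i) c) y) -> le (mul (bigsup f) c) y.
Proof.
  intro Hf. apply adjoint. apply bigsup_least. intro i. now apply adjoint.
Qed.

Lemma bigsup_mul_r {I : Type} (f : I -> L) (c y : L) :
  (forall i, le (mul c (f i)) y) -> le (mul c (bigsup f)) y.
Proof.
  intro Hf. rewrite mul_comm. apply bigsup_mul_l.
  intro i. now rewrite mul_comm.
Qed.

Definition scale {A : Type} (c : L) (f : A -> L) : A -> L := fun a => mul c (f a).

Lemma le_Sdeg_scale {A : Type} (c : L) (g f : A -> L) :
  le c (Sdeg g f) -> fle (scale c g) f.
Proof.
  intros Hc a. apply adjoint. apply le_trans with (1 := Hc).
  apply (biginf_lb (fun a => res (g a) (f a))).
Qed.

Lemma Sdeg_greatest {A : Type} (c : L) (g f : A -> L) :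
  fle (scale c g) f -> le c (Sdeg g f).
Proof.
  intro Hc. apply inf_greatest. intros x [a ->]. apply adjoint. apply Hc.
Qed.
End ResiduatedLattice.

Section Composition.
Context {L : CRL}.

Lemma vrcomp_mono {A B : Type} (f g : A -> L) (phi psi : A -> B -> L) :
  fle f g -> rle phi psi -> fle (vrcomp f phi) (vrcomp g psi).
Proof.
  intros Hfg Hphi b. apply bigsup_mono. intro a.
  apply le_trans with (mul (g a) (phi a b)).
  - now apply le_mul_l.
  - now apply le_mul_r.
Qed.

Lemma vvcomp_mono {A : Type} (f g h k : A -> L) :
  fle f g -> fle h k -> le (vvcomp f h) (vvcomp g k).
Proof.
  intros Hfg Hhk. apply bigsup_mono. intro a.
  apply le_trans with (mul (g a) (h a)).
  - now apply le_mul_l.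
  - now apply le_mul_r.
Qed.

Lemma scale_vrcomp {A B : Type} (c : L) (f : A -> L) (phi : A -> B -> L) :
  fle (scale c (vrcomp f phi)) (vrcomp (scale c f) phi).
Proof.
  intro b. apply bigsup_mul_r. intro a. apply (le_bigsup a).
  rewrite mul_assoc. apply le_refl.
Qed.

Lemma scale_vvcomp {A : Type} (c : L) (f g : A -> L) :
  le (mul c (vvcomp f g)) (vvcomp (scale c f) g).
Proof.
  apply bigsup_mul_r. intro a. apply (le_bigsup a).
  rewrite mul_assoc. apply le_refl.
Qed.

Lemma vrcomp_assoc {A B C : Type} (f : A -> L) (phi : A -> B -> L)
    (psi : B -> C -> L) :
  forall c, vrcomp (vrcomp f phi) psi c = vrcomp f (rcomp phi psi) c.
Proof.
  intro c. unfold vrcomp, rcomp. apply le_antisym.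
  - apply bigsup_least. intro b. apply bigsup_mul_l. intro a.
    apply (le_bigsup a). rewrite <- mul_assoc. apply le_mul_r.
    apply (le_bigsup b), le_refl.
  - apply bigsup_least. intro a. apply bigsup_mul_r. intro b.
    apply (le_bigsup b). rewrite mul_assoc. apply le_mul_l.
    apply (le_bigsup a), le_refl.
Qed.

Lemma vvcomp_rvcomp {A B : Type} (f : A -> L) (phi : A -> B -> L) (g : B -> L) :
  le (vvcomp (vrcomp f phi) g) (vvcomp f (rvcomp phi g)).
Proof.
  apply bigsup_least. intro b. apply bigsup_mul_l. intro a.
  apply (le_bigsup a). rewrite <- mul_assoc. apply le_mul_r.
  apply (le_bigsup b), le_refl.
Qed.
End Composition.

Section Simulation.
Context {L : CRL} {Sigma : Type} {A A' : FAut L Sigma}.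
Context {Phi : nat -> st A -> st A' -> L}.
Hypothesis Phi_tau : fle (rvcomp (finv (Phi 0)) (tau A)) (tau A').
Hypothesis Phi_delta : forall (s : Sigma) n,
  rle (rcomp (finv (Phi (S n))) (deltas A s)) (rcomp (deltas A' s) (finv (Phi n))).

Definition run (B : FAut L Sigma) (w : list Sigma) (f : st B -> L) : st B -> L :=
  fold_left (fun f s => vrcomp f (deltas B s)) w f.

Lemma sim_step (c : L) (f : st A -> L) (f' : st A' -> L) (s : Sigma) (n : nat) :
  fle (scale c f) (vrcomp f' (finv (Phi (S n)))) ->
  fle (scale c (vrcomp f (deltas A s)))
      (vrcomp (vrcomp f' (deltas A' s)) (finv (Phi n))).
Proof.
  intros Hinv b.
  apply le_trans with (1 := scale_vrcomp c f (deltas A s) b).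
  apply le_trans with (vrcomp (vrcomp f' (finv (Phi (S n)))) (deltas A s) b).
  { apply vrcomp_mono; [exact Hinv | intros ? ?; apply le_refl]. }
  rewrite vrcomp_assoc, vrcomp_assoc.
  apply vrcomp_mono; [intro; apply le_refl | apply Phi_delta].
Qed.

Lemma sim_final (c : L) (f : st A -> L) (f' : st A' -> L) :
  fle (scale c f) (vrcomp f' (finv (Phi 0))) ->
  le (mul c (vvcomp f (tau A))) (vvcomp f' (tau A')).
Proof.
  intro Hinv.
  apply le_trans with (1 := scale_vvcomp c f (tau A)).
  apply le_trans with (vvcomp (vrcomp f' (finv (Phi 0))) (tau A)).
  { apply vvcomp_mono; [exact Hinv | intro; apply le_refl]. }
  apply le_trans with (1 := vvcomp_rvcomp f' (finv (Phi 0)) (tau A)).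
  apply vvcomp_mono; [intro; apply le_refl | exact Phi_tau].
Qed.

Lemma sim_word (w : list Sigma) :
  forall (c : L) (f : st A -> L) (f' : st A' -> L),
  fle (scale c f) (vrcomp f' (finv (Phi (length w)))) ->
  le (mul c (vvcomp (run A w f) (tau A))) (vvcomp (run A' w f') (tau A')).
Proof.
  induction w as [| s w IH]; intros c f f' Hinv.
  - now apply sim_final.
  - apply IH. now apply sim_step.
Qed.
End Simulation.

Theorem mainTheorem7 (L : CRL) (Sigma : Type) (A A' : FAut L Sigma)
    (Phi : nat -> st A -> st A' -> L) :
  depth_bounded_sim A A' Phi ->
  le (dbs_norm A A' Phi) (Sdeg (lang A) (lang A')).
Proof.
  intros [_ [Phi_tau Phi_delta]].
  apply Sdeg_greatest. intro w.
  apply (sim_word Phi_tau Phi_delta w).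
  apply le_Sdeg_scale.
  apply (biginf_lb (fun n => rel_norm A A' (Phi n))).
Qed.
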